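(* Let $S\ni h$ be a $2$-admissible polarized lattice with $h^2=8$, $\Delta$ a Weyl chamber for $\operatorname{rt}(S,h)$, $\Gamma=\operatorname{Fn}_\Delta(S,h)$, and $v_1,v_2\in\Gamma$ two distinct vertices. Then the induced subgraph $\operatorname{Star}(v_1)\cap\operatorname{Star}(v_2)$ has no edges, and: (1) if $v_1\cdot v_2=1$, then $|\operatorname{Star}(v_1)\cap\operatorname{Star}(v_2)|\le1$; (2) if $v_1\cdot v_2=0$, then $|\operatorname{Star}(v_1)\cap\operatorname{Star}(v_2)|\le3$. If, in addition, $S\ni h$ is $3$-admissible, then both inequalities are strict.
   Context: All lattices even; $(S,h)$ polarized: $S$ hyperbolic, $h^2>0$. $\operatorname{root}_n(S,h)=\{r: r^2=-2,\ r\cdot h=n\}$, $\operatorname{rt}(S,h)$ spanned by $\operatorname{root}_0(S,h)$; a Weyl chamber $\Delta$ has simple roots $\mathfrak{b}(\Delta)$. $\Gamma=\operatorname{Fn}_\Delta(S,h)=\{l\in\operatorname{root}_1(S,h): l\cdot e\ge0\ \forall e\in\mathfrak{b}(\Delta)\}$, with edges of multiplicity $l_1\cdot l_2$. $\operatorname{Star}(v)=\{l\in\Gamma: l\cdot v=1\}$. $w$ is $m$-isotropic if $w^2=0$, $w\cdot h=m$; $2$-admissible: no $1$- or $2$-isotropic vector; $3$-admissible: in addition no $3$-isotropic vector. *)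

(* An even lattice of rank n is Z^n with an integral Gram matrix G. *)
From HB Require Import structures.
From mathcomp Require Import all_boot all_order all_algebra.
Set Implicit Arguments. Unset Strict Implicit. Unset Printing Implicit Defensive.
Import Order.TTheory GRing.Theory Num.Theory.
Local Open Scope ring_scope.

Definition lform (n : nat) (G : 'M[int]_n) (x y : 'rV[int]_n) : int :=
  (x *m G *m y^T) 0 0.

Definition even_lattice (n : nat) (G : 'M[int]_n) : Prop :=
  G^T = G /\ forall i, (2 %| G i i)%Z.

(* hyperbolic: signature (1, n-1), via a rational diagonalization (Sylvester) *)
Definition hyperbolic (n : nat) (G : 'M[int]_n) : Prop :=
  exists P : 'M[rat]_n, P \in unitmx /\
    exists i0 : 'I_n,
      let D := P *m map_mx (fun z : int => z%:~R : rat) G *m P^T in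
      (forall i j, i != j -> D i j = 0) /\ 0 < D i0 i0 /\
      (forall i, i != i0 -> D i i < 0).

Definition root (n : nat) (G : 'M[int]_n) (h : 'rV[int]_n) (k : int)
  (r : 'rV[int]_n) : Prop := lform G r r = -2 /\ lform G r h = k.

Definition isotropic (n : nat) (G : 'M[int]_n) (h : 'rV[int]_n) (m : int)
  (w : 'rV[int]_n) : Prop := lform G w w = 0 /\ lform G w h = m.

Definition admissible2 (n : nat) (G : 'M[int]_n) (h : 'rV[int]_n) : Prop :=
  forall w, ~ isotropic G h 1 w /\ ~ isotropic G h 2 w.

Definition admissible3 (n : nat) (G : 'M[int]_n) (h : 'rV[int]_n) : Prop :=
  admissible2 G h /\ forall w, ~ isotropic G h 3 w.

(* A Weyl chamber of rt(S,h) is encoded by a generic vector w in h^perp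
   (a point of the chamber, scaled to be integral). *)
Definition weyl_generic (n : nat) (G : 'M[int]_n) (h w : 'rV[int]_n) : Prop :=
  lform G w h = 0 /\ forall r, root G h 0 r -> lform G r w != 0.

Definition pos_root (n : nat) (G : 'M[int]_n) (h w r : 'rV[int]_n) : Prop :=
  root G h 0 r /\ 0 < lform G r w.

Definition simple_root (n : nat) (G : 'M[int]_n) (h w e : 'rV[int]_n) : Prop :=
  pos_root G h w e /\
  ~ (exists r1 r2, pos_root G h w r1 /\ pos_root G h w r2 /\ e = r1 + r2).

Definition Fn (n : nat) (G : 'M[int]_n) (h w l : 'rV[int]_n) : Prop :=
  root G h 1 l /\ forall e, simple_root G h w e -> 0 <= lform G l e.

Definition star2 (n : nat) (G : 'M[int]_n) (h w v1 v2 l : 'rV[int]_n) : Prop :=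
  Fn G h w l /\ lform G l v1 = 1 /\ lform G l v2 = 1.

Definition at_most (n : nat) (k : nat) (P : 'rV[int]_n -> Prop) : Prop :=
  forall s : seq 'rV[int]_n, uniq s -> (forall x, x \in s -> P x) ->
    (size s <= k)%N.

(* The engine is the Hodge index theorem: S is hyperbolic and h^2 > 0, so the
   form is negative definite on h^perp.  Two distinct vertices l1, l2 of Fn have
   l1.l2 >= 0: otherwise l1 - l2, which lies in h^perp, is either 0 or a root,
   and whichever of +-(l1 - l2) is positive pairs negatively with l1 or l2.
   For distinct l1, l2 in the common star, z = 2(v1 + v2 + l1 + l2) - h lies in
   h^perp with z^2 = 8(v1.v2 + l1.l2 - 1) and z.v1 odd, so v1.v2 + l1.l2 <= 0;
   this forces l1.l2 = 0, and excludes two such l when v1.v2 = 1.  When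
   v1.v2 = 0, four of them would make 2(v1 + v2) + l1 + l2 + l3 + l4 - h an
   isotropic vector of h^perp pairing to -1 with v1.  Finally v1 + v2 + l (if v1.v2 = 1) and
   h - v1 - v2 - l1 - l2 - l3 (if v1.v2 = 0) are 3-isotropic. *)

From Pilot Require Import Defs.
From mathcomp Require Import all_boot all_order all_algebra.
From mathcomp Require Import zify ring lra.
From Stdlib Require Import Classical_Prop.
Set Implicit Arguments.
Unset Strict Implicit.
Unset Printing Implicit Defensive.

Import Order.TTheory GRing.Theory Num.Theory.
Local Open Scope ring_scope.

Section BilinearForm.
Variables (R : comPzRingType) (n : nat) (G : 'M[R]_n).

Definition bform (x y : 'rV[R]_n) : R := (x *m G *m y^T) 0 0.

Lemma bformDl x y z : bform (x + y) z = bform x z + bform y z.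
Proof. by rewrite /bform !mulmxDl mxE. Qed.

Lemma bformDr x y z : bform x (y + z) = bform x y + bform x z.
Proof. by rewrite /bform linearD /= mulmxDr mxE. Qed.

Lemma bformZl a x z : bform (a *: x) z = a * bform x z.
Proof. by rewrite /bform -!scalemxAl mxE. Qed.

Lemma bformZr a x z : bform x (a *: z) = a * bform x z.
Proof. by rewrite /bform linearZ /= -scalemxAr mxE. Qed.

Lemma bformNl x z : bform (- x) z = - bform x z.
Proof. by rewrite -scaleN1r bformZl mulN1r. Qed.

Lemma bformNr x z : bform x (- z) = - bform x z.
Proof. by rewrite -scaleN1r bformZr mulN1r. Qed.

Lemma bform0l z : bform 0 z = 0.
Proof. by rewrite /bform !mul0mx mxE. Qed.

Lemma bformC : G^T = G -> forall x y, bform x y = bform y x.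
Proof.
move=> symG x y; have tr11 (M : 'M[R]_1) : M 0 0 = M^T 0 0 by rewrite mxE.
by rewrite /bform tr11 !trmx_mul trmxK symG mulmxA.
Qed.
End BilinearForm.

Lemma quad_form_diag (R : comPzRingType) n (D : 'M[R]_n) (X : 'rV[R]_n) :
  (forall i j, i != j -> D i j = 0) ->
  (X *m D *m X^T) 0 0 = \sum_i D i i * X 0 i ^+ 2.
Proof.
move=> diagD; rewrite mxE; apply: eq_bigr => i _.
rewrite !mxE (bigD1 i) //= big1 ?addr0 => [|j ji]; last by rewrite diagD ?mulr0.
by rewrite expr2 mulrCA mulrA.
Qed.

Section HodgeIndex.
Variables (R : realFieldType) (n : nat) (G P : 'M[R]_n) (i0 : 'I_n).
Hypotheses (symG : G^T = G) (unitP : P \in unitmx).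
Hypothesis diagD : forall i j, i != j -> (P *m G *m P^T) i j = 0.
Hypothesis negD : forall i, i != i0 -> (P *m G *m P^T) i i < 0.

Local Notation D := (P *m G *m P^T).
Local Notation coord x := (x *m invmx P).

Lemma bform_coord (x : 'rV[R]_n) : bform G x x = \sum_i D i i * (coord x) 0 i ^+ 2.
Proof.
rewrite -quad_form_diag // /bform -{1 2}(mulmxKV unitP x).
by rewrite trmx_mul !mulmxA.
Qed.

Lemma bform_term_le0 (y : 'rV[R]_n) i : (coord y) 0 i0 = 0 -> D i i * (coord y) 0 i ^+ 2 <= 0.
Proof.
move=> y0; have [->|ii0] := eqVneq i i0; first by rewrite y0 expr0n mulr0.
by rewrite nmulr_rle0 ?sqr_ge0 ?negD.
Qed.

Lemma bform_le0_coord0 (y : 'rV[R]_n) : (coord y) 0 i0 = 0 -> bform G y y <= 0.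
Proof. by move=> y0; rewrite bform_coord sumr_le0 // => i _; apply: bform_term_le0. Qed.

Lemma bform_eq0_coord0 (y : 'rV[R]_n) : (coord y) 0 i0 = 0 -> bform G y y = 0 -> y = 0.
Proof.
move=> y0 yy0; rewrite -(mulmxKV unitP y).
suff -> : coord y = 0 by rewrite mul0mx.
apply/rowP => i; rewrite [RHS]mxE; have [->//|ii0] := eqVneq i i0.
have : - (D i i * (coord y) 0 i ^+ 2) = 0.
  apply: (psumr_eq0P (P := predT) (F := fun j => - (D j j * (coord y) 0 j ^+ 2))) => //.
    by move=> j _; rewrite oppr_ge0 bform_term_le0.
  by rewrite sumrN -bform_coord yy0 oppr0.
move/eqP; rewrite oppr_eq0 mulf_eq0 (negbTE (ltr0_neq0 (negD ii0))) expf_eq0 /=.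
by move/eqP.
Qed.

Variable h : 'rV[R]_n.
Hypothesis hh_gt0 : 0 < bform G h h.

Lemma coord_h_neq0 : (coord h) 0 i0 != 0.
Proof. by apply/eqP => /bform_le0_coord0; rewrite leNgt hh_gt0. Qed.

Lemma bform_perp_decomp z : bform G z h = 0 ->
  exists u t, [/\ (coord u) 0 i0 = 0, z = u + t *: h
                & bform G z z = bform G u u - t ^+ 2 * bform G h h].
Proof.
move=> zh; set t := (coord z) 0 i0 / (coord h) 0 i0.
exists (z - t *: h), t; split.
- have rowE (A B : 'rV[R]_n) c : (A - c *: B) 0 i0 = A 0 i0 - c * B 0 i0.
    by rewrite !mxE.
  by rewrite mulmxBl -scalemxAl rowE divfK ?coord_h_neq0 // subrr.
- by rewrite subrK.
have uh : bform G (z - t *: h) h = - (t * bform G h h).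
  by rewrite bformDl bformNl bformZl zh add0r.
have zE : z = (z - t *: h) + t *: h by rewrite subrK.
move: uh zE; set u := z - t *: h; clearbody u => uh ->.
rewrite !(bformDl, bformDr, bformZl, bformZr) (bformC symG h u) uh; ring.
Qed.

Lemma hodge_index_le0 z : bform G z h = 0 -> bform G z z <= 0.
Proof.
move=> /bform_perp_decomp [u [t [u0 _ ->]]].
by rewrite subr_le0 (le_trans (bform_le0_coord0 u0)) // mulr_ge0 ?sqr_ge0 ?ltW.
Qed.

Lemma hodge_index_eq0 z : bform G z h = 0 -> bform G z z = 0 -> z = 0.
Proof.
move=> /bform_perp_decomp [u [t [u0 -> ->]]] zz0.
have uu_le0 := bform_le0_coord0 u0.
have th_ge0 : 0 <= t ^+ 2 * bform G h h by rewrite mulr_ge0 ?sqr_ge0 ?ltW.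
have uu0 : bform G u u = 0 by lra.
have /eqP : t ^+ 2 * bform G h h = 0 by lra.
rewrite mulf_eq0 (gt_eqF hh_gt0) orbF expf_eq0 /= => /eqP ->.
by rewrite scale0r addr0 (bform_eq0_coord0 u0 uu0).
Qed.
End HodgeIndex.

Local Notation ratmx := (map_mx (intr : int -> rat)).

Lemma lform_ratE n (G : 'M[int]_n) x y :
  (lform G x y)%:~R = bform (ratmx G) (ratmx x) (ratmx y).
Proof. by rewrite /bform map_trmx -!map_mxM mxE. Qed.

Section IntegralHodgeIndex.
Variables (n : nat) (G : 'M[int]_n) (h : 'rV[int]_n).
Hypotheses (evenG : even_lattice G) (hypG : hyperbolic G) (hh_gt0 : 0 < lform G h h).

Let symGQ : (ratmx G)^T = ratmx G.
Proof. by case: evenG => symG _; rewrite map_trmx symG. Qed.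

Let hhQ_gt0 : 0 < bform (ratmx G) (ratmx h) (ratmx h).
Proof. by rewrite -lform_ratE ltr0z. Qed.

Lemma lform_perp_le0 z : lform G z h = 0 -> lform G z z <= 0.
Proof.
have [P [unitP [i0 [diagD [_ negD]]]]] := hypG.
move=> zh; rewrite -(ler_int rat) lform_ratE.
by apply: (hodge_index_le0 symGQ unitP diagD negD hhQ_gt0); rewrite -lform_ratE zh.
Qed.

Lemma lform_perp_eq0 z : lform G z h = 0 -> lform G z z = 0 -> z = 0.
Proof.
have [P [unitP [i0 [diagD [_ negD]]]]] := hypG.
move=> zh zz; have zQ : ratmx z = 0.
  by apply: (hodge_index_eq0 symGQ unitP diagD negD hhQ_gt0); rewrite -lform_ratE ?zh ?zz.
apply/rowP => j; have /eqP := congr1 (fun A : 'rV[rat]_n => A 0 j) zQ.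
by rewrite !mxE intr_eq0 => /eqP.
Qed.
End IntegralHodgeIndex.

Section LformAlgebra.
Variables (n : nat) (G : 'M[int]_n).

Lemma lformDl x y z : lform G (x + y) z = lform G x z + lform G y z.
Proof. exact: bformDl. Qed.

Lemma lformDr x y z : lform G x (y + z) = lform G x y + lform G x z.
Proof. exact: bformDr. Qed.

Lemma lformZl a x z : lform G (a *: x) z = a * lform G x z.
Proof. exact: bformZl. Qed.

Lemma lformZr a x z : lform G x (a *: z) = a * lform G x z.
Proof. exact: bformZr. Qed.

Lemma lformNl x z : lform G (- x) z = - lform G x z.
Proof. exact: bformNl. Qed.

Lemma lformNr x z : lform G x (- z) = - lform G x z.
Proof. exact: bformNr. Qed.

Lemma lform0l z : lform G 0 z = 0.
Proof. exact: bform0l. Qed.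

Lemma lformC : even_lattice G -> forall x y, lform G x y = lform G y x.
Proof. by case=> symG _; apply: bformC. Qed.

End LformAlgebra.

Ltac add_lform_sym evenG x y :=
  lazymatch goal with
  | _ : lform _ x y = lform _ y x |- _ => fail
  | _ : lform _ y x = lform _ x y |- _ => fail
  | _ => pose proof (lformC evenG x y)
  end.

(* Expand the goal by bilinearity and record the symmetry of every pairing in
   sight, so that [lia] can treat the pairings as atoms. *)
Ltac lform_lia evenG :=
  rewrite ?(lformDl, lformDr, lformZl, lformZr, lformNl, lformNr);
  repeat match goal with
  | |- context [lform _ ?x ?y] => add_lform_sym evenG x y
  | _ : context [lform _ ?x ?y] |- _ => add_lform_sym evenG x y
  end;
  lia.

Section WeylChamber.
Variables (n : nat) (G : 'M[int]_n) (h w : 'rV[int]_n).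

Lemma weyl_root_sign r : weyl_generic G h w ->
  Defs.root G h 0 r -> pos_root G h w r \/ pos_root G h w (- r).
Proof.
move=> [_ w_generic] [rr rh]; have := w_generic r (conj rr rh).
rewrite neq_lt => /orP [rw_lt0|rw_gt0]; [right | by left].
by split; [split|]; rewrite ?(lformNl, lformNr) ?opprK; lia.
Qed.

Lemma lform_pos_root_ge0 l :
  (forall e, simple_root G h w e -> 0 <= lform G l e) ->
  forall r, pos_root G h w r -> 0 <= lform G l r.
Proof.
move=> simple_ge0.
suff ind k r : pos_root G h w r -> lform G r w <= k%:Z -> 0 <= lform G l r.
  by move=> r r_pos; apply: (ind `|lform G r w|%N r r_pos); lia.
elim: k r => [|k IHk] r r_pos rw_le; first by have := r_pos.2; lia.
have [|not_simple] := classic (simple_root G h w r); first exact: simple_ge0.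
have [r1 [r2 [r1_pos [r2_pos r12]]]] :
    exists r1 r2, pos_root G h w r1 /\ pos_root G h w r2 /\ r = r1 + r2.
  by apply: NNPP => no_split; apply: not_simple.
move: rw_le; rewrite r12 lformDl lformDr => rw_le.
have [r1w r2w] := (r1_pos.2, r2_pos.2).
by apply: addr_ge0; [apply: (IHk _ r1_pos) | apply: (IHk _ r2_pos)]; lia.
Qed.

Lemma Fn_lform_ge0 l1 l2 :
  even_lattice G -> hyperbolic G -> 0 < lform G h h -> weyl_generic G h w ->
  Fn G h w l1 -> Fn G h w l2 -> l1 <> l2 -> 0 <= lform G l1 l2.
Proof.
move=> evenG hypG hh_gt0 wgen [[l1l1 l1h] l1_ge0] [[l2l2 l2h] l2_ge0] l12.
have zh : lform G (l1 - l2) h = 0 by lform_lia evenG.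
have zz : lform G (l1 - l2) (l1 - l2) = -4 - 2 * lform G l1 l2 by lform_lia evenG.
have zz_le0 := lform_perp_le0 evenG hypG hh_gt0 zh.
rewrite leNgt; apply/negP => l1l2_lt0.
have [l1l2|l1l2] : lform G l1 l2 = -2 \/ lform G l1 l2 = -1 by lia.
  by apply: l12; apply/subr0_eq/(lform_perp_eq0 evenG hypG hh_gt0 zh); lia.
have z_root : Defs.root G h 0 (l1 - l2) by split; lia.
case: (weyl_root_sign wgen z_root) => [z_pos|mz_pos].
  by have := lform_pos_root_ge0 l1_ge0 z_pos; lform_lia evenG.
by have := lform_pos_root_ge0 l2_ge0 mz_pos; lform_lia evenG.
Qed.

End WeylChamber.

Definition common_nbr n (G : 'M[int]_n) (h a b c : 'rV[int]_n) : Prop :=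
  Defs.root G h 1 c /\ lform G c a = 1 /\ lform G c b = 1.

Section CommonNeighbours.
Variables (n : nat) (G : 'M[int]_n) (h a b : 'rV[int]_n).
Hypotheses (evenG : even_lattice G) (hypG : hyperbolic G) (hh : lform G h h = 8).
Hypotheses (a_root : Defs.root G h 1 a) (b_root : Defs.root G h 1 b).

Local Notation nbr := (common_nbr G h a b).

Lemma isotropic3_of_triangle c : lform G a b = 1 -> nbr c -> isotropic G h 3 (a + b + c).
Proof.
case: a_root b_root => [aa ah] [bb bh] ab [[cc ch] [ca cb]].
by split; lform_lia evenG.
Qed.

Lemma isotropic3_of_orthogonal_triple c1 c2 c3 : lform G a b = 0 ->
  nbr c1 -> nbr c2 -> nbr c3 ->
  lform G c1 c2 = 0 -> lform G c1 c3 = 0 -> lform G c2 c3 = 0 ->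
  isotropic G h 3 (h - (a + b + c1 + c2 + c3)).
Proof.
case: a_root b_root => [aa ah] [bb bh] ab.
move=> [[c1c1 c1h] [c1a c1b]] [[c2c2 c2h] [c2a c2b]] [[c3c3 c3h] [c3a c3b]] c12 c13 c23.
by split; lform_lia evenG.
Qed.

Let hh_gt0 : 0 < lform G h h. Proof. by rewrite hh. Qed.

Lemma common_nbr_cross_le0 c d : nbr c -> nbr d -> lform G a b + lform G c d <= 0.
Proof.
case: a_root b_root => [aa ah] [bb bh] [[cc ch] [ca cb]] [[dd dh] [da db]].
pose z := 2 *: (a + b + c + d) - h.
have zh : lform G z h = 0 by rewrite /z; lform_lia evenG.
have zz : lform G z z = 8 * (lform G a b + lform G c d) - 8 by rewrite /z; lform_lia evenG.
have za : lform G z a = 2 * lform G a b - 1 by rewrite /z; lform_lia evenG.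
have zz_le0 := lform_perp_le0 evenG hypG hh_gt0 zh.
rewrite leNgt; apply/negP => sum_gt0.
have z0 : z = 0 by apply: (lform_perp_eq0 evenG hypG hh_gt0 zh); lia.
by move: za; rewrite z0 lform0l; lia.
Qed.

Lemma no_orthogonal_nbr_quadruple c1 c2 c3 c4 : lform G a b = 0 ->
  nbr c1 -> nbr c2 -> nbr c3 -> nbr c4 ->
  lform G c1 c2 = 0 -> lform G c1 c3 = 0 -> lform G c1 c4 = 0 ->
  lform G c2 c3 = 0 -> lform G c2 c4 = 0 -> lform G c3 c4 = 0 -> False.
Proof.
case: a_root b_root => [aa ah] [bb bh] ab.
move=> [[c1c1 c1h] [c1a c1b]] [[c2c2 c2h] [c2a c2b]] [[c3c3 c3h] [c3a c3b]].
move=> [[c4c4 c4h] [c4a c4b]] c12 c13 c14 c23 c24 c34.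
pose z := 2 *: (a + b) + c1 + c2 + c3 + c4 - h.
have zh : lform G z h = 0 by rewrite /z; lform_lia evenG.
have zz : lform G z z = 0 by rewrite /z; lform_lia evenG.
have za : lform G z a = -1 by rewrite /z; lform_lia evenG.
by move: za; rewrite (lform_perp_eq0 evenG hypG hh_gt0 zh zz) lform0l.
Qed.

End CommonNeighbours.

Lemma at_mostP n k (P : 'rV[int]_n -> Prop) :
  (forall s, uniq s -> size s = k.+1 -> (forall x, x \in s -> P x) -> False) ->
  at_most k P.
Proof.
move=> no_large s s_uniq sP; rewrite leqNgt; apply/negP => s_large.
apply: (no_large (take k.+1 s)); [exact: take_uniq | exact: size_takel |].
by move=> x /mem_take; apply: sP.
Qed.

Section CommonStar.
Variables (n : nat) (G : 'M[int]_n) (h w v1 v2 : 'rV[int]_n).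
Hypotheses (evenG : even_lattice G) (hypG : hyperbolic G) (hh : lform G h h = 8).
Hypotheses (wgen : weyl_generic G h w) (Fv1 : Fn G h w v1) (Fv2 : Fn G h w v2).
Hypothesis v12 : v1 <> v2.

Local Notation star := (star2 G h w v1 v2).

Let hh_gt0 : 0 < lform G h h. Proof. by rewrite hh. Qed.
Let v1_root : Defs.root G h 1 v1. Proof. exact: Fv1.1. Qed.
Let v2_root : Defs.root G h 1 v2. Proof. exact: Fv2.1. Qed.

Lemma star2_common_nbr l : star l -> common_nbr G h v1 v2 l.
Proof. by case=> -[l_root _] lv. Qed.

Lemma star2_cross_le0 l1 l2 : star l1 -> star l2 -> lform G v1 v2 + lform G l1 l2 <= 0.
Proof.
move=> /star2_common_nbr S1 /star2_common_nbr S2.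
exact: (common_nbr_cross_le0 evenG hypG hh v1_root v2_root S1 S2).
Qed.

Lemma star2_orthogonal l1 l2 : star l1 -> star l2 -> l1 <> l2 -> lform G l1 l2 = 0.
Proof.
move=> S1 S2 l12; have := star2_cross_le0 S1 S2.
have := Fn_lform_ge0 evenG hypG hh_gt0 wgen Fv1 Fv2 v12.
have := Fn_lform_ge0 evenG hypG hh_gt0 wgen S1.1 S2.1 l12.
lia.
Qed.

Lemma star2_at_most1 : lform G v1 v2 = 1 -> at_most 1 star.
Proof.
move=> v1v2; apply: at_mostP => -[|l1 [|l2 []]] //= /andP[+ _].
rewrite inE => /eqP l12 _ sP.
have [S1 S2] : star l1 /\ star l2 by split; apply: sP; rewrite !inE eqxx ?orbT.
by have := star2_cross_le0 S1 S2; rewrite v1v2 (star2_orthogonal S1 S2 l12).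
Qed.

Lemma star2_at_most3 : lform G v1 v2 = 0 -> at_most 3 star.
Proof.
move=> v1v2; apply: at_mostP => -[|l1 [|l2 [|l3 [|l4 []]]]] //=.
rewrite !inE !negb_or -!andbA andbT.
move=> /and5P[/eqP n12 /eqP n13 /eqP n14 /eqP n23 /andP[/eqP n24 /eqP n34]] _ sP.
have [S1 S2 S3 S4] : [/\ star l1, star l2, star l3 & star l4].
  by split; apply: sP; rewrite !inE eqxx ?orbT.
have nbr := star2_common_nbr.
apply: (no_orthogonal_nbr_quadruple evenG hypG hh v1_root v2_root v1v2
          (nbr _ S1) (nbr _ S2) (nbr _ S3) (nbr _ S4)); exact: star2_orthogonal.
Qed.

Lemma star2_at_most0 : admissible3 G h -> lform G v1 v2 = 1 -> at_most 0 star.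
Proof.
move=> [_ no_iso3] v1v2; apply: at_mostP => -[|l []] //= _ _ sP.
apply: (no_iso3 (v1 + v2 + l)).
apply: (isotropic3_of_triangle evenG hh v1_root v2_root v1v2).
by apply: star2_common_nbr; apply: sP; rewrite inE.
Qed.

Lemma star2_at_most2 : admissible3 G h -> lform G v1 v2 = 0 -> at_most 2 star.
Proof.
move=> [_ no_iso3] v1v2; apply: at_mostP => -[|l1 [|l2 [|l3 []]]] //=.
rewrite !inE !negb_or -!andbA andbT => /and3P[/eqP n12 /eqP n13 /eqP n23] _ sP.
have [S1 S2 S3] : [/\ star l1, star l2 & star l3].
  by split; apply: sP; rewrite !inE eqxx ?orbT.
apply: (no_iso3 (h - (v1 + v2 + l1 + l2 + l3))).
have nbr := star2_common_nbr.
apply: (isotropic3_of_orthogonal_triple evenG hh v1_root v2_root v1v2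
          (nbr _ S1) (nbr _ S2) (nbr _ S3)); exact: star2_orthogonal.
Qed.

End CommonStar.

Theorem lemma5p2 (n : nat) (G : 'M[int]_n) (h w v1 v2 : 'rV[int]_n) :
  even_lattice G -> hyperbolic G -> lform G h h = 8 ->
  admissible2 G h -> weyl_generic G h w ->
  Fn G h w v1 -> Fn G h w v2 -> v1 <> v2 ->
  (forall l1 l2, star2 G h w v1 v2 l1 -> star2 G h w v1 v2 l2 -> l1 <> l2 ->
     lform G l1 l2 = 0) /\
  (lform G v1 v2 = 1 -> at_most 1 (star2 G h w v1 v2)) /\
  (lform G v1 v2 = 0 -> at_most 3 (star2 G h w v1 v2)) /\
  (admissible3 G h ->
     (lform G v1 v2 = 1 -> at_most 0 (star2 G h w v1 v2)) /\
     (lform G v1 v2 = 0 -> at_most 2 (star2 G h w v1 v2))).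
Proof.
(* 2-admissibility is not needed: Hodge index alone excludes the configurations. *)
move=> evenG hypG hh _ wgen Fv1 Fv2 v12.
split; first exact: star2_orthogonal.
split; first exact: star2_at_most1.
split; first exact: star2_at_most3.
by move=> adm3; split; [apply: star2_at_most0 | apply: star2_at_most2].
Qed.
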